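(* Let $V_s, V_{sr} : [0,\infty) \to \mathbb{R}^6$ be continuously differentiable (the actual and required spatial velocities of the surrogate end-effector), let $M_e, D_e, K_e \in \mathbb{R}^{6\times 6}$ be the environmental mass, damping and stiffness matrices with $M_e$ symmetric positive semidefinite, and let $\mathbf{x}_e : [0,\infty)\to\mathbb{R}^6$ be the environment deformation. Define the contact force and the required contact force $$f_e = M_e \dot V_s + D_e V_s + K_e \mathbf{x}_e, \qquad f_{ed} = M_e \dot V_{sr} + D_e V_s + K_e \mathbf{x}_e,$$ and let ${}^T F = N_c f_e$, ${}^T F_r = N_c f_{ed}$ for a matrix $N_c\in\mathbb{R}^{6\times 6}$, where the contact-frame velocities ${}^T V, {}^T V_r \in \mathbb{R}^6$ satisfy $N_c^T({}^T V_r - {}^T V) = V_{sr} - V_s$. Let the virtual power flow at the contact frame be $$p_T = ({}^T V_r - {}^T V)^T({}^T F_r - {}^T F).$$ Then there exists a positive constant $\varrho_{0s}$ such that $$\liminf_{t\to\infty} \int_0^t p_T \, d\tau \;\ge\; -\varrho_{0s}.$$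
   Context: This concerns a force-reflected teleoperation setting in which a surrogate robot's end-effector (frame $\{T\}$) contacts an unknown environment modeled as a mass–damper–spring system. The virtual power flow (VPF) at a frame $\{A\}$ is defined as the inner product of the spatial velocity error and the spatial force error, $p_A = ({}^A V_r - {}^A V)^T({}^A F_r - {}^A F)$, where the subscript $r$ denotes ''required'' quantities generated by the controller. *)

From HB Require Import structures.
From mathcomp Require Import all_boot all_order all_algebra.
From mathcomp Require Import all_classical all_reals all_analysis.
Set Implicit Arguments. Unset Strict Implicit. Unset Printing Implicit Defensive.
Import Order.TTheory GRing.Theory Num.Theory.
Import numFieldNormedType.Exports.
Local Open Scope classical_set_scope.
Local Open Scope ring_scope.

Definition vcomp {R : realType} (V : R -> 'cV[R]_6) (i : 'I_6) : R -> R :=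
  fun s => V s i ord0.

Definition dvec {R : realType} (V : R -> 'cV[R]_6) (t : R) : 'cV[R]_6 :=
  \col_i (derive1 (vcomp V i) t).

Definition C1_nonneg {R : realType} (V : R -> 'cV[R]_6) : Prop :=
  forall i : 'I_6,
    (forall t : R, 0 <= t -> derivable (vcomp V i) t 1) /\
    {within `[0, +oo[, continuous (derive1 (vcomp V i))}.

Definition sym_psd {R : realType} (M : 'M[R]_6) : Prop :=
  M^T = M /\ forall v : 'cV[R]_6, 0 <= (v^T *m M *m v) ord0 ord0.

Definition f_e {R : realType} (Me De Ke : 'M[R]_6) (Vs xe : R -> 'cV[R]_6)
  (t : R) : 'cV[R]_6 :=
  Me *m dvec Vs t + De *m Vs t + Ke *m xe t.

Definition f_ed {R : realType} (Me De Ke : 'M[R]_6) (Vs Vsr xe : R -> 'cV[R]_6)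
  (t : R) : 'cV[R]_6 :=
  Me *m dvec Vsr t + De *m Vs t + Ke *m xe t.

Definition vpf {R : realType} (V Vr F Fr : 'cV[R]_6) : R :=
  ((Vr - V)^T *m (Fr - F)) ord0 ord0.

(* With e := V_sr - V_s, the contact-frame relation N_c^T (V_r - V) = e and
   f_ed - f_e = M_e (dV_sr - dV_s) give p_T = e^T M_e de/dt.  For symmetric M_e
   this is the derivative of the stored energy E = e^T M_e e / 2, so the work
   done over [0, t] is E(t) - E(0) >= -E(0) because M_e is positive
   semidefinite, and rho = E(0) + 1 works. *)

From HB Require Import structures.
From mathcomp Require Import all_boot all_order all_algebra.
From mathcomp Require Import all_classical all_reals all_analysis.
From mathcomp Require Import ring lra.
Set Implicit Arguments.
Unset Strict Implicit.
Unset Printing Implicit Defensive.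

Import Order.TTheory GRing.Theory Num.Theory.
Import numFieldNormedType.Exports.
Local Open Scope classical_set_scope.
Local Open Scope ring_scope.

Lemma submxE (R : zmodType) m n (A B : 'M[R]_(m, n)) i j :
  (A - B) i j = A i j - B i j.
Proof. by rewrite !mxE. Qed.

Section mxform.
Variables (R : numFieldType) (n : nat).
Implicit Types (M : 'M[R]_n) (u v : 'cV[R]_n).

Definition mxform M u v : R := (u^T *m M *m v) 0 0.

Lemma mxformE M u v :
  mxform M u v = \sum_(i < n) \sum_(j < n) u i 0 * M i j * v j 0.
Proof.
rewrite /mxform mxE exchange_big; apply: eq_bigr => j _.
by rewrite !mxE mulr_suml; apply: eq_bigr => i _; rewrite !mxE.
Qed.

Lemma mxform_sym M u v : M^T = M -> mxform M u v = mxform M v u.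
Proof.
move=> symM; rewrite !mxformE exchange_big.
apply: eq_bigr => i _; apply: eq_bigr => j _.
have -> : M i j = M j i by rewrite -{1}symM mxE.
by ring.
Qed.

Lemma mxform_fctE M (u v : R -> 'cV[R]_n) :
  (fun s => mxform M (u s) (v s)) =
  \sum_(i < n) \sum_(j < n) (fun s => u s i 0 * M i j * v s j 0).
Proof.
apply/funext => s; rewrite mxformE fct_sumE.
by apply: eq_bigr => i _; rewrite fct_sumE.
Qed.

Lemma is_derive_mxform M (u v : R -> 'cV[R]_n) (du dv : 'cV[R]_n) (x : R) :
  (forall i, is_derive x 1 (fun s => u s i 0) (du i 0)) ->
  (forall i, is_derive x 1 (fun s => v s i 0) (dv i 0)) ->
  is_derive x 1 (fun s => mxform M (u s) (v s))
    (mxform M du (v x) + mxform M (u x) dv).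
Proof.
move=> hu hv; rewrite mxform_fctE !mxformE -big_split.
apply: is_derive_sum => i; rewrite -big_split; apply: is_derive_sum => j.
by apply: is_derive_eq; rewrite scaler0 add0r /GRing.scale /=; ring.
Qed.

Lemma within_continuous_mxform (A : set R) M (u v : R -> 'cV[R]_n) :
  (forall i, {within A, continuous (fun s => u s i 0)}) ->
  (forall i, {within A, continuous (fun s => v s i 0)}) ->
  {within A, continuous (fun s => mxform M (u s) (v s))}.
Proof.
rewrite /from_subspace mxform_fctE => cu cv x.
elim/big_ind: _ => [|f g cf cg|i _]; first exact: cst_continuous.
  exact: (continuousD (T := subspace A)).
elim/big_ind: _ => [|f g cf cg|j _]; first exact: cst_continuous.
  exact: (continuousD (T := subspace A)).
by apply: continuousM (cv j x); apply: continuousM (cu i x) _; apply: cst_continuous.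
Qed.

End mxform.

Lemma Rintegral_derive (R : realType) (f F : R -> R) (a b : R) : a < b ->
  {within `[a, b], continuous f} ->
  (forall x, a <= x <= b -> is_derive x 1 F (f x)) ->
  Rintegral lebesgue_measure `[a, b] f = F b - F a.
Proof.
move=> ab cf dF.
have cF x : a <= x <= b -> {for x, continuous F}.
  move=> /dF [dFx _]; apply/differentiable_continuous.
  by rewrite -derivable1_diffP.
have dF' x : x \in `]a, b[ -> is_derive x 1 F (f x).
  by rewrite in_itv /= => /andP[ax xb]; apply: dF; rewrite !ltW.
rewrite /Rintegral (continuous_FTC2 (F := F) ab cf) ?EFinB //.
- split; first by move=> x /dF' [].
  + by apply: cvg_at_right_filter; apply: cF; rewrite lexx ltW.
  + by apply: cvg_at_left_filter; apply: cF; rewrite lexx ltW.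
- by move=> x /dF' dFx; rewrite derive1E derive_val.
Qed.

Lemma limf_einf_ge (T : choiceType) (X : filteredType T) (R : realType)
    (f : X -> \bar R) (F : set_system X) (a : \bar R) :
  F [set x | a <= f x]%E -> (a <= limf_einf f F)%E.
Proof.
move=> Fa; rewrite limf_einfE.
apply: (@le_trans _ _ (ereal_inf (f @` [set x | a <= f x]%E))).
  by apply: le_ereal_inf_tmp => _ [x ax <-].
by apply: ereal_sup_ubound; exists [set x | a <= f x]%E.
Qed.

Section C1_nonneg.
Variables (R : realType) (V : R -> 'cV[R]_6).
Hypothesis hV : C1_nonneg V.

Lemma C1_nonneg_is_derive (t : R) i : 0 <= t ->
  is_derive t 1 (fun s => V s i 0) (dvec V t i 0).
Proof.
by move=> t0; rewrite mxE derive1E; apply: derivableP; exact: (hV i).1.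
Qed.

Lemma C1_nonneg_within_continuous (a b : R) i : 0 <= a ->
  {within `[a, b], continuous (fun s => V s i 0)}.
Proof.
move=> a0; apply: derivable_within_continuous => s.
by rewrite in_itv /= => /andP[ha _]; apply: (hV i).1; exact: le_trans a0 ha.
Qed.

Lemma C1_nonneg_within_continuous_dvec (a b : R) i : 0 <= a ->
  {within `[a, b], continuous (fun s => dvec V s i 0)}.
Proof.
move=> a0; have -> : (fun s => dvec V s i 0) = derive1 (vcomp V i).
  by apply/funext => s; rewrite mxE.
apply: continuous_subspaceW (hV i).2 => s /=.
by rewrite !in_itv /= => /andP[ha _]; rewrite (le_trans a0 ha).
Qed.

End C1_nonneg.

Lemma f_ed_sub_f_e (R : realType) (Me De Ke : 'M[R]_6)
    (Vs Vsr xe : R -> 'cV[R]_6) t :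
  f_ed Me De Ke Vs Vsr xe t - f_e Me De Ke Vs xe t =
  Me *m (dvec Vsr t - dvec Vs t).
Proof.
by rewrite /f_ed /f_e mulmxBr opprD addrACA subrr addr0 opprD addrACA subrr addr0.
Qed.

Lemma vpf_contactE (R : realType) (Vs Vsr xe TV TVr : R -> 'cV[R]_6)
    (Me De Ke N : 'M[R]_6) t :
  N^T *m (TVr t - TV t) = Vsr t - Vs t ->
  vpf (TV t) (TVr t) (N *m f_e Me De Ke Vs xe t) (N *m f_ed Me De Ke Vs Vsr xe t)
  = mxform Me (Vsr t - Vs t) (dvec Vsr t - dvec Vs t).
Proof.
move=> hN; rewrite /vpf /mxform -mulmxBr f_ed_sub_f_e.
by rewrite !mulmxA -[N]trmxK -trmx_mul hN.
Qed.

Section contact_energy.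
Variables (R : realType) (Vs Vsr : R -> 'cV[R]_6) (Me : 'M[R]_6).
Hypotheses (hVs : C1_nonneg Vs) (hVsr : C1_nonneg Vsr) (hMe : sym_psd Me).

Definition contact_energy (t : R) : R :=
  2^-1 * mxform Me (Vsr t - Vs t) (Vsr t - Vs t).

Lemma contact_energy_ge0 t : 0 <= contact_energy t.
Proof. by rewrite mulr_ge0 ?invr_ge0 ?ler0n //; exact: hMe.2. Qed.

Lemma is_derive_contact_energy (t : R) : 0 <= t ->
  is_derive t 1 contact_energy (mxform Me (Vsr t - Vs t) (dvec Vsr t - dvec Vs t)).
Proof.
move=> t0; have de i : is_derive t 1 (fun s => (Vsr s - Vs s) i 0)
    ((dvec Vsr t - dvec Vs t) i 0).
  under eq_fun do rewrite submxE; rewrite submxE.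
  exact: is_deriveB (C1_nonneg_is_derive hVsr i t0) (C1_nonneg_is_derive hVs i t0).
apply: is_derive_eq (is_deriveZ (2^-1) (is_derive_mxform Me de de)) _.
by rewrite (mxform_sym _ _ hMe.1) /GRing.scale /=; field.
Qed.

Lemma within_continuous_contact_power (a b : R) : 0 <= a ->
  {within `[a, b], continuous
     (fun t => mxform Me (Vsr t - Vs t) (dvec Vsr t - dvec Vs t))}.
Proof.
move=> a0; apply: within_continuous_mxform => i; rewrite /from_subspace => x.
- have -> : (fun s => (Vsr s - Vs s) i 0) = (fun s => Vsr s i 0) - (fun s => Vs s i 0).
    by apply/funext => s; rewrite submxE.
  by apply: (continuousB (T := subspace _)); exact: C1_nonneg_within_continuous.
- have -> : (fun s => (dvec Vsr s - dvec Vs s) i 0) =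
      (fun s => dvec Vsr s i 0) - (fun s => dvec Vs s i 0).
    by apply/funext => s; rewrite submxE.
  by apply: (continuousB (T := subspace _)); exact: C1_nonneg_within_continuous_dvec.
Qed.

End contact_energy.

Theorem lemma4 (R : realType)
  (Vs Vsr xe TV TVr : R -> 'cV[R]_6) (Me De Ke : 'M[R]_6) (Nc : R -> 'M[R]_6)
  (hVs : C1_nonneg Vs) (hVsr : C1_nonneg Vsr) (hMe : sym_psd Me)
  (hNc : forall t : R, 0 <= t -> (Nc t)^T *m (TVr t - TV t) = Vsr t - Vs t) :
  let TF := fun t => Nc t *m f_e Me De Ke Vs xe t in
  let TFr := fun t => Nc t *m f_ed Me De Ke Vs Vsr xe t in
  let pT := fun t => vpf (TV t) (TVr t) (TF t) (TFr t) in
  exists rho : R, 0 < rho /\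
    (limf_einf (fun t : R => (Rintegral lebesgue_measure `[0, t]%classic pT)%:E)
       (pinfty_nbhs R) >= (- rho)%:E)%E.
Proof.
move=> TF TFr pT; pose E := contact_energy Vs Vsr Me.
have E_ge0 t : 0 <= E t by exact: contact_energy_ge0.
have int_pT t : 0 < t -> Rintegral lebesgue_measure `[0, t]%classic pT = E t - E 0.
  move=> t0; have dE s : 0 <= s <= t ->
      is_derive s 1 E (mxform Me (Vsr s - Vs s) (dvec Vsr s - dvec Vs s)).
    by case/andP => s0 _; exact: is_derive_contact_energy.
  rewrite -(Rintegral_derive t0 (within_continuous_contact_power hVs hVsr (lexx 0)) dE).
  apply: eq_Rintegral => s; rewrite inE /= in_itv /= => /andP[s0 _].
  exact: vpf_contactE (hNc s s0).
exists (E 0 + 1); split; first by have := E_ge0 0; lra.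
apply: limf_einf_ge; exists 0; split => [|t t0]; first exact: real0.
by rewrite /= lee_fin int_pT //; have := E_ge0 t; lra.
Qed.
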